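(* Let $1 \le q \le w$ be integers and let $Q$ be a subset of $[w]$ of size $q$. Let $Y$ and $Z$ be two finite totally ordered sets and let $A_1,\ldots, A_r$ be $q$-element subsets of $Y$. If $|Z| \ge |Y| + r(w-q)$, then there exist an injection $\pi\colon Y \to Z$ and $r$ subsets $W_1,\ldots, W_r$ of $Z$, each of size $w$, such that for every $i \in [r]$, $Q$ selects $\pi(A_i)$ in $W_i$. Moreover, one can further require that $W_i \cap W_j = \pi(A_i \cap A_j)$ for any $i\neq j\in[r]$.
   Context: $[w]=\{1,\dots,w\}$. If $e_1<e_2<\dots<e_w$ are the elements of a totally ordered set $W$ and $Q\subseteq[w]$, the subset selected by $Q$ in $W$ is $\{e_i : i\in Q\}$. For a map $\pi$ and a set $A$, $\pi(A)=\{\pi(a):a\in A\}$. *)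

From mathcomp Require Import all_boot all_order.
Set Implicit Arguments. Unset Strict Implicit. Unset Printing Implicit Defensive.
Import Order.TTheory.
Local Open Scope order_scope.

Definition sorted_elems (d : Order.disp_t) (T : finOrderType d) (W : {set T})
  : seq T := sort <=%O (enum W).

(* The subset selected by Q in W: { e_i : i in Q }.  Q is a subset of 'I_w,
   where the ordinal k : 'I_w stands for the index k+1 of [w]. *)
Definition selected (d : Order.disp_t) (T : finOrderType d) (w : nat)
  (Q : {set 'I_w}) (W : {set T}) : {set T} :=
  [set x in W | [exists k in Q, index x (sorted_elems W) == nat_of_ord k]].

(* Order all the points to be placed in Z: the elements of Y and, for every
   i, the w - q positions of the i-th window outside Q.  Such a position p is
   put immediately below the element of A_i sitting at the next position of Q
   (above all of Y if there is none); gaps below the same element are ordered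
   by (i, p).  With these choices each window is increasing, its positions in
   Q carry exactly A_i, and distinct windows share only elements of Y.  There
   are |Y| + r(w - q) points, so ranking them embeds them monotonically in Z. *)

From mathcomp Require Import all_boot all_order.
Set Implicit Arguments. Unset Strict Implicit. Unset Printing Implicit Defensive.
Import Order.TTheory.

(* Keys (rank in Y of the anchor, is the point an element of Y, tail), ordered
   lexicographically: gaps get [false] and so sit just below their anchor. *)
Local Notation key := (nat *l (bool *l (nat *l nat))).

Section CountBelow.
Local Open Scope order_scope.
Variables (d : Order.disp_t) (T : finPOrderType d) (S : {set T}).

Definition nbelow (x : T) : nat := #|[set y in S | y < x]|.

Lemma nbelow_le x x' : x <= x' -> (nbelow x <= nbelow x')%N.
Proof.
move=> le_xx'; apply/subset_leq_card/subsetP => y; rewrite !inE.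
by case/andP=> -> /lt_le_trans->.
Qed.

Lemma nbelow_lt x x' : x \in S -> x < x' -> (nbelow x < nbelow x')%N.
Proof.
move=> Sx lt_xx'; apply/proper_card/properP; split.
  by apply/subsetP => y; rewrite !inE => /andP[-> /lt_trans->].
by exists x; rewrite !inE ?Sx ?lt_xx' ?ltxx.
Qed.

Lemma nbelow_le_card x : (nbelow x <= #|S|)%N.
Proof. by apply/subset_leq_card/subsetP => y; rewrite inE => /andP[]. Qed.

Lemma nbelow_lt_card x : x \in S -> (nbelow x < #|S|)%N.
Proof.
move=> Sx; apply/proper_card/properP; split.
  by apply/subsetP => y; rewrite inE => /andP[].
by exists x; rewrite ?inE ?ltxx ?andbF.
Qed.

End CountBelow.

Section Anchor.
Local Open Scope order_scope.
Variables (d : Order.disp_t) (Y : finOrderType d) (A : {set Y}).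

Lemma nbelowT_lt : {homo nbelow [set: Y] : y y' / y < y'}.
Proof. by move=> y y'; apply: nbelow_lt; rewrite inE. Qed.

Lemma nbelowT_inj : injective (nbelow [set: Y]).
Proof. exact/inc_inj/le_mono/nbelowT_lt. Qed.

(* Beyond the last element of A the default #|Y| acts as an anchor above Y. *)
Definition anchor (t : nat) : nat :=
  nth #|Y| [seq nbelow [set: Y] y | y <- sorted_elems A] t.

Lemma anchor_mem t : (t < #|A|)%N ->
  exists2 y, y \in A & anchor t = nbelow [set: Y] y.
Proof.
move=> tA.
have /mapP[y] : anchor t \in [seq nbelow [set: Y] y | y <- sorted_elems A].
  by apply: mem_nth; rewrite size_map /sorted_elems size_sort -cardE.
by rewrite /sorted_elems mem_sort mem_enum; exists y.
Qed.

Lemma sorted_anchors :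
  sorted ltn [seq nbelow [set: Y] y | y <- sorted_elems A].
Proof.
rewrite (homo_sorted nbelowT_lt) //.
by rewrite /sorted_elems sort_lt_sorted enum_uniq.
Qed.

Lemma anchor_lt t t' : (t < t')%N -> (t < #|A|)%N -> (anchor t < anchor t')%N.
Proof.
have size_anchors : size [seq nbelow [set: Y] y | y <- sorted_elems A] = #|A|.
  by rewrite size_map /sorted_elems size_sort -cardE.
move=> lt_tt' tA; have [t'A | At'] := ltnP t' #|A|.
  by apply: (sorted_ltn_nth ltn_trans) sorted_anchors _ _ _ _ lt_tt';
    rewrite inE size_anchors.
have [y _ ->] := anchor_mem tA.
rewrite /anchor nth_default ?size_anchors // -cardsT.
by apply/nbelow_lt_card; rewrite inE.
Qed.

End Anchor.

Section Keys.
Local Open Scope order_scope.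
Variables (w r : nat) (Q : {set 'I_w}) (d : Order.disp_t) (Y : finOrderType d).
Variable A : 'I_r -> {set Y}.
Hypothesis cardA : forall i, #|A i| = #|Q|.

Definition elem_key (y : Y) : key := (nbelow [set: Y] y, (true, (0, 0)))%N.

Definition pos_key (i : 'I_r) (p : 'I_w) : key :=
  (anchor (A i) (nbelow Q p),
   (p \in Q, if p \in Q then (0, 0) else (val i, val p)))%N.

Lemma elem_key_inj : injective elem_key.
Proof. by move=> y y' [/nbelowT_inj]. Qed.

Lemma pos_key_lt i : {homo pos_key i : p p' / p < p'}.
Proof.
move=> p p' lt_pp'; rewrite /pos_key ltxi_pair /=.
have [lt_t | gt_t | eq_t] := ltngtP (nbelow Q p) (nbelow Q p').
- have tA : (nbelow Q p < #|A i|)%N.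
    by rewrite cardA; apply: leq_trans lt_t (nbelow_le_card _ _).
  have lt_a := anchor_lt lt_t tA.
  by rewrite !leEnat ltnW //= leqNgt lt_a.
- by move: gt_t; rewrite ltnNge nbelow_le // ltW.
have pQ : p \notin Q.
  by apply/negP => pQ; have := nbelow_lt pQ lt_pp'; rewrite eq_t ltnn.
rewrite eq_t lexx ltxi_pair (negPf pQ) /=.
by case: (p' \in Q) => //=; rewrite ltxi_pair lexx ltEnat.
Qed.

Lemma pos_keyQ i p : p \in Q -> exists2 y, y \in A i & pos_key i p = elem_key y.
Proof.
move=> pQ; have tA : (nbelow Q p < #|A i|)%N by rewrite cardA nbelow_lt_card.
by have [y Ay eq_y] := anchor_mem tA; exists y; rewrite // /pos_key pQ eq_y.
Qed.

Lemma pos_key_eqQ i j p p' : i != j -> pos_key i p = pos_key j p' -> p \in Q.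
Proof.
move=> neq_ij [_]; case: (p \in Q) => //.
by case: (p' \in Q) => // _ [/val_inj eq_ij _]; rewrite eq_ij eqxx in neq_ij.
Qed.

End Keys.

Section Embedding.
Local Open Scope order_scope.
Variables (dZ : Order.disp_t) (Z : finOrderType dZ).

Lemma exists_lt_embedding (d : Order.disp_t) (T : orderType d)
    (z0 : Z) (s : seq T) :
  (size s <= #|Z|)%N -> exists f : T -> Z, {in s &, {homo f : x y / x < y}}.
Proof.
move=> size_s; set u := sort <=%O (undup s).
have u_lt : sorted <%O u by rewrite sort_lt_sorted undup_uniq.
have mem_u x : (x \in u) = (x \in s) by rewrite mem_sort mem_undup.
exists (fun x => nth z0 (sorted_elems [set: Z]) (index x u)) => x y xs ys lt_xy.
have index_lt : (index x u < index y u)%N.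
  rewrite ltnNge; apply/negP.
  move=> /(sorted_leq_index le_trans lexx (sort_le_sorted _)).
  by rewrite !mem_u => /(_ ys xs); rewrite leNgt lt_xy.
have size_u : (size u <= size (sorted_elems [set: Z]))%N.
  rewrite size_sort /sorted_elems size_sort -cardE cardsT.
  exact: leq_trans (size_undup _) size_s.
have Z_lt : sorted <%O (sorted_elems [set: Z]).
  by rewrite sort_lt_sorted enum_uniq.
by rewrite (lt_sorted_ltn_nth z0 Z_lt) // inE (leq_trans _ size_u)
  ?index_mem ?mem_u.
Qed.

Lemma selected_imset_homo (w : nat) (Q : {set 'I_w}) (f : 'I_w -> Z) :
  {homo f : p p' / p < p'} -> selected Q [set f p | p : 'I_w] = f @: Q.
Proof.
move=> f_lt; have f_inj : injective f := inc_inj (le_mono f_lt).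
have sorted_f : sorted_elems [set f p | p : 'I_w] = map f (enum 'I_w).
  apply: lt_sorted_eq; rewrite ?sort_lt_sorted ?enum_uniq //.
    by rewrite (homo_sorted f_lt) // -Order.enum_ord sort_lt_sorted enum_uniq.
  move=> x; rewrite /sorted_elems mem_sort mem_enum.
  by apply/imsetP/mapP => -[p _ ->]; exists p; rewrite ?mem_enum.
apply/setP => x; rewrite !inE sorted_f.
apply/andP/imsetP => [[/imsetP[p _ ->] /existsP[k /andP[kQ]]]|[p pQ ->]].
  by rewrite index_map // index_enum_ord => /eqP/val_inj->; exists k.
split; first exact: imset_f.
by apply/existsP; exists p; rewrite pQ index_map // index_enum_ord eqxx.
Qed.

End Embedding.

Section Construction.
Local Open Scope order_scope.
Variables (w r : nat) (Q : {set 'I_w}) (dY dZ : Order.disp_t).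
Variables (Y : finOrderType dY) (Z : finOrderType dZ) (A : 'I_r -> {set Y}).
Hypothesis cardA : forall i, #|A i| = #|Q|.

Definition keys : seq key :=
  [seq elem_key y | y <- enum Y] ++
  [seq pos_key Q A i p | i <- enum 'I_r, p <- enum (~: Q)].

Lemma size_keys : size keys = (#|Y| + r * (w - #|Q|))%N.
Proof.
rewrite size_cat size_map size_allpairs -!cardE card_ord; congr (_ + r * _)%N.
by rewrite [LHS]cardsCs setCK card_ord.
Qed.

Lemma elem_key_in (y : Y) : elem_key y \in keys.
Proof. by rewrite mem_cat map_f ?mem_enum. Qed.

Lemma pos_key_in i p : pos_key Q A i p \in keys.
Proof.
have [pQ | pNQ] := boolP (p \in Q).
  by have [y _ ->] := pos_keyQ cardA i pQ; apply: elem_key_in.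
by rewrite mem_cat allpairs_f ?orbT ?mem_enum ?inE.
Qed.

Variable f : key -> Z.
Hypothesis f_lt : {in keys &, {homo f : x y / x < y}}.

Definition embed (y : Y) : Z := f (elem_key y).

Definition window (i : 'I_r) : {set Z} := [set f (pos_key Q A i p) | p : 'I_w].

Lemma inj_in_keys : {in keys &, injective f}.
Proof. exact/inc_inj_in/le_mono_in. Qed.

Lemma embed_inj : injective embed.
Proof.
by move=> y y' /(inj_in_keys (elem_key_in y) (elem_key_in y'))/elem_key_inj.
Qed.

Lemma window_lt i : {homo (fun p => f (pos_key Q A i p)) : p p' / p < p'}.
Proof. by move=> p p' lt_pp'; rewrite f_lt ?pos_key_in ?pos_key_lt. Qed.

Lemma card_window i : #|window i| = w.
Proof. by rewrite card_imset ?card_ord //; apply/inc_inj/le_mono/window_lt. Qed.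

Lemma selected_window i : selected Q (window i) = embed @: A i.
Proof.
rewrite /window selected_imset_homo; last exact: window_lt.
apply/eqP; rewrite eqEcard; apply/andP; split.
  apply/subsetP => _ /imsetP[p pQ ->].
  by have [y Ay ->] := pos_keyQ cardA i pQ; apply: imset_f.
rewrite !card_imset ?cardA //; last exact: embed_inj.
exact/inc_inj/le_mono/window_lt.
Qed.

Lemma embed_window i y : y \in A i -> embed y \in window i.
Proof.
move=> Ay; have : embed y \in selected Q (window i).
  by rewrite selected_window imset_f.
by rewrite inE => /andP[].
Qed.

Lemma window_cap i j : i != j -> window i :&: window j = embed @: (A i :&: A j).
Proof.
move=> neq_ij; apply/setP => x; apply/setIP/imsetP => [[]|[y /setIP[Ayi Ayj] ->]];
  last by rewrite !embed_window.
move=> /imsetP[p _ ->] /imsetP[p' _].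
move=> /(inj_in_keys (pos_key_in _ _) (pos_key_in _ _)) eq_key.
have [y Ayi eq_y] := pos_keyQ cardA i (pos_key_eqQ neq_ij eq_key).
rewrite eq_sym in neq_ij.
have [y' Ayj eq_y'] := pos_keyQ cardA j (pos_key_eqQ neq_ij (esym eq_key)).
have eq_yy' : y = y' by apply: elem_key_inj; rewrite -eq_y -eq_y'.
by exists y; rewrite /embed -?eq_y // inE Ayi eq_yy'.
Qed.

End Construction.

Theorem lemma29 (q w r : nat) (Q : {set 'I_w})
  (dY dZ : Order.disp_t) (Y : finOrderType dY) (Z : finOrderType dZ)
  (A : 'I_r -> {set Y}) :
  1 <= q -> q <= w -> #|Q| = q ->
  (forall i, #|A i| = q) ->
  #|Y| + r * (w - q) <= #|Z| ->
  exists pi : Y -> Z, injective pi /\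
    exists W : 'I_r -> {set Z},
      (forall i, #|W i| = w) /\
      (forall i, selected Q (W i) = pi @: A i) /\
      (forall i j, i != j -> W i :&: W j = pi @: (A i :&: A j)).
Proof.
move=> q_gt0 _ cardQ cardA cardZ.
have cardAQ i : #|A i| = #|Q| by rewrite cardA cardQ.
have [Y0 | Y_gt0] := posnP #|Y|.
  have noY (y : Y) : False by have := card0_eq Y0 y; rewrite !inE.
  have noI (i : 'I_r) : False.
    have /card_gt0P[y _] : 0 < #|A i| by rewrite cardA.
    exact: noY y.
  exists (fun y => match noY y with end); split => [y|]; first by case: (noY y).
  by exists (fun i => match noI i with end); split; [|split] => i; case: (noI i).
have /card_gt0P[z0 _] : 0 < #|Z|.
  exact: leq_trans Y_gt0 (leq_trans (leq_addr _ _) cardZ).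
have size_keys_Z : size (keys Q A) <= #|Z| by rewrite size_keys cardQ.
have [f f_lt] := exists_lt_embedding z0 size_keys_Z.
exists (embed f); split; first exact: embed_inj f_lt.
exists (window Q A f); split; first exact: (card_window cardAQ f_lt).
split.
- exact: (selected_window cardAQ f_lt).
- exact: (window_cap cardAQ f_lt).
Qed.
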